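(* Let $F:[n]^\ell\to\mathbb{R}$, let $i\in\{0,\dots,\ell\}$, and let $\varepsilon>0$ be real. Then $$\mathbb{E}_X[F_i(X)^4]\ge 4\varepsilon^3\eta_i-3\varepsilon^4\delta(F)+B(F),$$ where $B(F)=4\varepsilon^3\,\mathbb{E}_X[(F^3-F)F_i]+3\varepsilon^4\,\mathbb{E}_X[F-F^4]$, and this inequality is a sum-of-squares inequality in the indeterminates $\{F(X)\}$.
   Context: $[n]=\mathbb{Z}/n\mathbb{Z}$, $\chi_T(x)=\prod_j e^{2\pi iT_jx_j/n}$ for $T\in[n]^\ell$, $\hat F(T)=\mathbb{E}_Y[F(Y)\overline{\chi_T(Y)}]$, $|T|=|\{j:T_j\ne0\}|$. $F_i=\sum_{|T|=i}\hat F(T)\chi_T$, $\eta_i=\mathbb{E}_X[F_i(X)^2]$, $\delta(F)=\mathbb{E}_X[F(X)]$; powers of $F$ are pointwise and expectations are over uniform $X\in[n]^\ell$. *)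

From HB Require Import structures.
From mathcomp Require Import all_boot all_order all_algebra.
From mathcomp Require Import reals trigo.
From mathcomp Require Import complex.
Set Implicit Arguments. Unset Strict Implicit. Unset Printing Implicit Defensive.
Import Order.TTheory GRing.Theory Num.Theory.
Local Open Scope ring_scope.
Local Open Scope complex_scope.

Section Fourier.
Variables (R : realType) (n l : nat).

(* points of [n]^l, [n] = Z/nZ represented by 'I_n (arithmetic done mod n
   inside the character, which only depends on residues mod n) *)
Definition pt := {ffun 'I_l -> 'I_n}.

Definition expi (theta : R) : R[i] := (cos theta) +i* (sin theta).

Definition chi (T x : pt) : R[i] :=
  \prod_(j < l) expi (2 * pi * ((T j : nat) * (x j : nat))%:R / n%:R).

Definition Ex (K : fieldType) (f : pt -> K) : K :=
  (\sum_(X : pt) f X) / #|{: pt}|%:R.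

Definition Fhat (F : pt -> R) (T : pt) : R[i] :=
  Ex (fun Y => (F Y)%:C * (chi T Y)^*).

Definition wt (T : pt) : nat := #|[set j | T j != 0 :> nat]|.

Definition Fpart (F : pt -> R) (i : nat) (x : pt) : R[i] :=
  \sum_(T : pt | wt T == i) Fhat F T * chi T x.

Definition etaF (F : pt -> R) (i : nat) : R[i] := Ex (fun X => Fpart F i X ^+ 2).

Definition deltaF (F : pt -> R) : R := Ex F.

Definition Bterm (eps : R) (F : pt -> R) (i : nat) : R[i] :=
  4 * (eps ^+ 3)%:C * Ex (fun X => ((F X ^+ 3 - F X)%:C) * Fpart F i X)
  + 3 * (eps ^+ 4)%:C * (Ex (fun X => F X - F X ^+ 4))%:C.

End Fourier.

(* Real polynomials in the finitely many indeterminates indexed by a finType V: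
   a polynomial is a finite list of (coefficient, exponent vector) monomials. *)
Definition rpoly (R : realType) (V : finType) := seq (R * {ffun V -> nat}).

Definition rpoly_eval (R : realType) (V : finType) (p : rpoly R V) (v : V -> R) : R :=
  \sum_(m <- p) m.1 * \prod_(x : V) v x ^+ m.2 x.

(* Write a := F_i(X) and b := eps F(X).  F_i is the image of F under the
   orthogonal projection onto the span of the characters of weight i; its
   kernel is real, symmetric and idempotent, whence E[F_i^2] = E[F F_i].  With
   this, E[F_i^4] minus the right-hand side is exactly E[a^4 - 4 b^3 a + 3 b^4],
   and pointwise a^4 - 4 b^3 a + 3 b^4 = ((a - b)(a + b))^2 + 2 ((a - b) b)^2.
   Since a is a linear form in the values of F, averaging these squares over X
   gives a sum of squares of polynomials in the indeterminates {F(X)}. *)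

From HB Require Import structures.
From mathcomp Require Import all_boot all_order all_algebra.
From mathcomp Require Import reals trigo complex.
From mathcomp Require Import ring lra.
Set Implicit Arguments. Unset Strict Implicit. Unset Printing Implicit Defensive.
Import Order.TTheory GRing.Theory Num.Theory.
Local Open Scope complex_scope.
Local Open Scope ring_scope.

Section RootsOfUnity.
Variables (R : realType) (m : nat).
Local Notation n := m.+1.

Lemma expiD (a b : R) : expi (a + b) = expi a * expi b.
Proof. by rewrite /expi cosD sinD; simpc; congr (_ +i* _); ring. Qed.

Definition omega (k : nat) : R[i] := expi (2 * pi * k%:R / n%:R).

Lemma omega0 : omega 0 = 1.
Proof. by rewrite /omega mulr0 mul0r /expi cos0 sin0. Qed.

Lemma omegaD a b : omega (a + b) = omega a * omega b.
Proof. by rewrite /omega -expiD natrD !mulrDr mulrDl. Qed.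

Lemma omegaM a b : omega (a * b) = omega a ^+ b.
Proof. by elim: b => [|b IHb]; rewrite ?muln0 ?omega0 // mulnS omegaD IHb exprS. Qed.

Lemma omega_mod k : omega (k %% n) = omega k.
Proof.
have omega_n : omega n = 1.
  by rewrite /omega mulfK ?pnatr_eq0 // mulr_natl /expi cos2pi sin2pi.
by rewrite {2}(divn_eq k n) omegaD mulnC omegaM omega_n expr1n mul1r.
Qed.

Lemma omega_conj k : omega k * (omega k)^* = 1.
Proof. by rewrite /omega /expi /=; simpc; rewrite -!expr2 cos2Dsin2 mulrC addNr. Qed.

Lemma omega_neq1 s : (0 < s < n)%N -> omega s != 1.
Proof.
move=> /andP[s_gt0 s_lt_n]; pose t : R := pi * s%:R / n%:R.
have t_gt0 : 0 < t by rewrite !mulr_gt0 ?pi_gt0 ?invr_gt0 ?ltr0n.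
have t_lt_pi : t < pi.
  by rewrite /t -mulrA gtr_pMr ?pi_gt0 // ltr_pdivrMr ?ltr0n // mul1r ltr_nat.
have sin_t_gt0 : 0 < sin t by apply: sin_gt0_pi; rewrite t_gt0 t_lt_pi.
rewrite /omega /expi (_ : 2 * pi * s%:R / n%:R = t *+ 2); last by rewrite /t; ring.
apply/eqP => -[]; rewrite cos_mulr2n cos2sin2 => cos_2t_eq1 _.
have : sin t ^+ 2 = 0 by lra.
by move/eqP; rewrite expf_eq0 /= gt_eqF.
Qed.

Lemma sum_omega_mul s : (s %% n != 0)%N -> \sum_(x < n) omega (s * x) = 0.
Proof.
move=> s_nz; have omega_s_neq1 : omega s != 1.
  by rewrite -omega_mod omega_neq1 // lt0n s_nz ltn_pmod.
under eq_bigr do rewrite omegaM.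
have omega_s_n : omega s ^+ n = 1 by rewrite -omegaM -omega_mod modnMl omega0.
have := subrX1 (omega s) n; rewrite omega_s_n subrr => /esym/eqP.
by rewrite mulf_eq0 subr_eq0 (negbTE omega_s_neq1) => /eqP.
Qed.

End RootsOfUnity.

Section Characters.
Variables (R : realType) (m l : nat).
Local Notation n := m.+1.
Local Notation pt := (pt n l).
Local Notation chi := (@chi R n l).
Local Notation N := (#|{: pt}|%:R : R[i]).

Lemma chiE (T X : pt) : chi T X = \prod_(j < l) omega R m (T j * X j).
Proof. by []. Qed.

Lemma chiD (T U X : pt) : chi (T + U) X = chi T X * chi U X.
Proof.
rewrite !chiE -big_split; apply: eq_bigr => j _ /=.
by rewrite ffunE -omega_mod /= modnMml omega_mod mulnDl omegaD.
Qed.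

Lemma chi0 (X : pt) : chi 0 X = 1.
Proof. by rewrite chiE big1 // => j _; rewrite ffunE mul0n omega0. Qed.

Lemma chiN (T X : pt) : (chi T X)^* = chi (- T) X.
Proof.
have chi_conj : chi T X * (chi T X)^* = 1.
  by rewrite chiE rmorph_prod -big_split big1 // => j _; apply: omega_conj.
apply: (mulfI (x := chi T X)); last by rewrite chi_conj -chiD subrr chi0.
by apply: contra_eq_neq chi_conj => ->; rewrite mul0r eq_sym oner_neq0.
Qed.

Lemma wtN (T : pt) : wt (- T) = wt T.
Proof.
by apply: eq_card => j; rewrite !inE ffunE -[_ != 0 :> nat]/(- T j != 0) oppr_eq0.
Qed.

Lemma sum_chi (T : pt) : \sum_(X : pt) chi T X = (T == 0)%:R * N.
Proof.
have [->|T_nz] := eqVneq T 0.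
  by under eq_bigr do rewrite chi0; rewrite sumr_const mul1r.
have [j Tj_nz] : exists j, T j != 0.
  apply/existsP; apply: contraR T_nz => /existsPn T0.
  by apply/eqP/ffunP => j; rewrite ffunE; apply/eqP/negPn.
under eq_bigr do rewrite chiE.
rewrite -(bigA_distr_bigA (fun j (x : 'I_n) => omega R m (T j * x))) /=.
rewrite (bigD1 j) //= sum_omega_mul ?mul0r //.
by rewrite modn_small //; apply: contraNneq Tj_nz => Tj0; apply/eqP/val_inj.
Qed.

Lemma chi_orthogonal (T U : pt) :
  \sum_(X : pt) chi T X * (chi U X)^* = (T == U)%:R * N.
Proof.
by under eq_bigr do rewrite chiN -chiD; rewrite sum_chi subr_eq0.
Qed.

End Characters.

Lemma proj_sum_sqr (V : finType) (K : comPzRingType) (k : V -> V -> K) (f : V -> K) :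
    (forall x y, k x y = k y x) -> (forall x z, \sum_y k x y * k y z = k x z) ->
  \sum_x (\sum_y k x y * f y) ^+ 2 = \sum_x f x * \sum_y k x y * f y.
Proof.
move=> k_sym k_idem.
transitivity (\sum_x \sum_y \sum_z f y * (k y x * k x z) * f z).
  apply: eq_bigr => x _; rewrite expr2 big_distrl; apply: eq_bigr => y _ /=.
  by rewrite big_distrr; apply: eq_bigr => z _ /=; rewrite [k x y]k_sym; ring.
rewrite exchange_big; apply: eq_bigr => y _ /=; rewrite exchange_big big_distrr.
by apply: eq_bigr => z _ /=; rewrite -big_distrl -big_distrr /= k_idem mulrA.
Qed.

Section ProjectionKernel.
Variables (R : realType) (m l i : nat).
Local Notation n := m.+1.
Local Notation pt := (pt n l).
Local Notation chi := (@chi R n l).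
Local Notation N := (#|{: pt}|%:R : R[i]).

Definition projker (X Y : pt) : R[i] :=
  (\sum_(T : pt | wt T == i) chi T X * (chi T Y)^*) / N.

Lemma Fpart_projker (F : pt -> R) X : Fpart F i X = \sum_Y (F Y)%:C * projker X Y.
Proof.
rewrite /Fpart /projker; under eq_bigr do rewrite /Fhat /Ex !mulr_suml.
under [RHS]eq_bigr do rewrite mulr_suml mulr_sumr.
by rewrite [RHS]exchange_big; apply: eq_bigr => T _; apply: eq_bigr => Y _; ring.
Qed.

Lemma projker_conj X Y : (projker X Y)^* = projker Y X.
Proof.
rewrite /projker rmorphM fmorphV rmorph_nat rmorph_sum; congr (_ / _).
by apply: eq_bigr => T _; rewrite rmorphM /= conjCK mulrC.
Qed.

Lemma projker_sym X Y : projker X Y = projker Y X.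
Proof.
(* Reindexing by T |-> -T preserves the weight and conjugates the characters. *)
rewrite /projker (reindex_inj (h := fun T : pt => - T) oppr_inj) /=; congr (_ / _).
by apply: eq_big => [T|T _]; rewrite ?wtN // -!chiN conjCK mulrC.
Qed.

Lemma projker_idem X Z : \sum_Y projker X Y * projker Y Z = projker X Z.
Proof.
have expand Y : projker X Y * projker Y Z = N^-1 / N *
    \sum_(T | wt T == i) \sum_(U | wt U == i)
       chi T X * (chi U Z)^* * (chi U Y * (chi T Y)^*).
  rewrite /projker mulrACA mulrC big_distrl; congr (_ * _); apply: eq_bigr => T _ /=.
  by rewrite big_distrr; apply: eq_bigr => U _ /=; ring.
have orth : \sum_Y \sum_(T | wt T == i) \sum_(U | wt U == i)
      chi T X * (chi U Z)^* * (chi U Y * (chi T Y)^*)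
    = (\sum_(T | wt T == i) chi T X * (chi T Z)^*) * N.
  rewrite exchange_big big_distrl; apply: eq_bigr => T wtT /=.
  rewrite exchange_big /=; under eq_bigr do rewrite -big_distrr /= chi_orthogonal.
  rewrite (bigD1 T wtT) /= eqxx mul1r big1 ?addr0 // => U /andP[_ /negbTE ->].
  by rewrite mul0r mulr0.
rewrite (eq_bigr _ (fun Y _ => expand Y)) -mulr_sumr orth /projker.
by rewrite mulrC -mulrA mulVKf // pnatr_eq0 -lt0n; apply/card_gt0P; exists 0.
Qed.

Definition rprojker X Y : R := complex.Re (projker X Y).

Lemma projkerE X Y : projker X Y = (rprojker X Y)%:C.
Proof.
have kXY_real : projker X Y \is Num.real by rewrite CrealE projker_conj projker_sym.
by rewrite /rprojker RRe_real.
Qed.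

Lemma rprojker_sym X Y : rprojker X Y = rprojker Y X.
Proof. by rewrite /rprojker projker_sym. Qed.

Lemma rprojker_idem X Z : \sum_Y rprojker X Y * rprojker Y Z = rprojker X Z.
Proof.
apply: complexI; rewrite -projkerE -projker_idem rmorph_sum.
by apply: eq_bigr => Y _; rewrite rmorphM /= -!projkerE.
Qed.

Definition rFpart (F : pt -> R) X : R := \sum_Y rprojker X Y * F Y.

Lemma FpartE F X : Fpart F i X = (rFpart F X)%:C.
Proof.
rewrite Fpart_projker rmorph_sum; apply: eq_bigr => Y _.
by rewrite projkerE -rmorphM mulrC.
Qed.

Lemma parseval F : \sum_X rFpart F X ^+ 2 = \sum_X F X * rFpart F X.
Proof. exact: proj_sum_sqr rprojker_sym rprojker_idem. Qed.

End ProjectionKernel.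

Section RealPolynomials.
Variables (R : realType) (V : finType).
Local Notation rpoly := (rpoly R V).
Local Notation term := (R * {ffun V -> nat})%type.
Implicit Types (p q : rpoly) (x : V -> R).

Definition rvar_exp (v : V) : {ffun V -> nat} := [ffun w => (w == v : nat)].

Lemma prod_rvar_exp x v : \prod_w x w ^+ rvar_exp v w = x v.
Proof.
rewrite (bigD1 v) //= ffunE eqxx big1 ?mulr1 // => w /negbTE wv.
by rewrite ffunE wv.
Qed.

Definition rvar (v : V) : rpoly := [:: (1, rvar_exp v)].
Definition rlin (c : V -> R) : rpoly := [seq (c v, rvar_exp v) | v <- index_enum V].
Definition radd p q : rpoly := p ++ q.
Definition rscale (c : R) p : rpoly := [seq (c * t.1, t.2) | t <- p].
Definition rsub p q : rpoly := radd p (rscale (-1) q).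
Definition rmul p q : rpoly :=
  [seq (s.1 * t.1, [ffun v => (s.2 v + t.2 v)%N]) | s : term <- p, t : term <- q].

Lemma rvar_eval v x : rpoly_eval (rvar v) x = x v.
Proof. by rewrite /rpoly_eval big_seq1 prod_rvar_exp mul1r. Qed.

Lemma rlin_eval c x : rpoly_eval (rlin c) x = \sum_v c v * x v.
Proof. by rewrite /rpoly_eval big_map; apply: eq_bigr => v _; rewrite prod_rvar_exp. Qed.

Lemma radd_eval p q x : rpoly_eval (radd p q) x = rpoly_eval p x + rpoly_eval q x.
Proof. exact: big_cat. Qed.

Lemma rscale_eval c p x : rpoly_eval (rscale c p) x = c * rpoly_eval p x.
Proof. by rewrite /rpoly_eval big_map mulr_sumr; apply: eq_bigr => t _; rewrite mulrA. Qed.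

Lemma rsub_eval p q x : rpoly_eval (rsub p q) x = rpoly_eval p x - rpoly_eval q x.
Proof. by rewrite radd_eval rscale_eval mulN1r. Qed.

Lemma rmul_eval p q x : rpoly_eval (rmul p q) x = rpoly_eval p x * rpoly_eval q x.
Proof.
rewrite /rpoly_eval big_allpairs_dep mulr_suml; apply: eq_bigr => s _.
rewrite mulr_sumr; apply: eq_bigr => t _.
under eq_bigr do rewrite ffunE exprD.
by rewrite big_split /=; ring.
Qed.

Lemma Ex_sos (n l : nat) (ps : pt n l -> seq rpoly) :
  exists qs : seq rpoly, forall x,
    Ex (fun X => \sum_(p <- ps X) rpoly_eval p x ^+ 2) = \sum_(q <- qs) rpoly_eval q x ^+ 2.
Proof.
pose c := Num.sqrt (#|{: pt n l}|%:R^-1 : R).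
exists [seq rscale c p | X <- index_enum (pt n l), p <- ps X] => x.
rewrite /Ex big_allpairs_dep mulr_suml; apply: eq_bigr => X _.
rewrite mulr_suml; apply: eq_bigr => p _.
by rewrite rscale_eval exprMn sqr_sqrtr ?invr_ge0 ?ler0n // mulrC.
Qed.

End RealPolynomials.

Definition quartic_gap (K : comPzRingType) (a b : K) : K :=
  a ^+ 4 - 4 * b ^+ 3 * a + 3 * b ^+ 4.

Definition quartic_gap_sos (R : realType) (V : finType) (p q : rpoly R V) :=
  [:: rmul (rsub p q) (radd p q); rmul (rsub p q) q; rmul (rsub p q) q].

Lemma quartic_gap_sosE (R : realType) (V : finType) (p q : rpoly R V) x :
  \sum_(r <- quartic_gap_sos p q) rpoly_eval r x ^+ 2
    = quartic_gap (rpoly_eval p x) (rpoly_eval q x).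
Proof.
by rewrite !big_cons big_nil /quartic_gap !rmul_eval rsub_eval radd_eval; ring.
Qed.

Lemma eq_Ex (n l : nat) (K : fieldType) (f g : pt n l -> K) : f =1 g -> Ex f = Ex g.
Proof. by move=> fg; rewrite /Ex (eq_bigr _ (fun X _ => fg X)). Qed.

Lemma Ex_real (R : realType) (n l : nat) (g : pt n l -> R) :
  Ex (fun X => (g X)%:C) = (Ex g)%:C.
Proof. by rewrite /Ex rmorphM fmorphV rmorph_nat rmorph_sum. Qed.

Section Gap.
Variables (R : realType) (m l i : nat) (eps : R) (F : pt m.+1 l -> R).
Local Notation a := (rFpart i F).

Lemma Ex_Fpart_pow k : Ex (fun X => Fpart F i X ^+ k) = (Ex (fun X => a X ^+ k))%:C.
Proof. by rewrite -Ex_real; apply: eq_Ex => X; rewrite FpartE rmorphXn. Qed.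

Lemma Ex_mul_Fpart g :
  Ex (fun X => (g X)%:C * Fpart F i X) = (Ex (fun X => g X * a X))%:C.
Proof. by rewrite -Ex_real; apply: eq_Ex => X; rewrite FpartE rmorphM. Qed.

Lemma Ex_quartic_gap :
  Ex (fun X => a X ^+ 4) - (4 * eps ^+ 3 * Ex (fun X => a X ^+ 2) - 3 * eps ^+ 4 * Ex F
    + (4 * eps ^+ 3 * Ex (fun X => (F X ^+ 3 - F X) * a X)
       + 3 * eps ^+ 4 * Ex (fun X => F X - F X ^+ 4)))
  = Ex (fun X => quartic_gap (a X) (eps * F X)).
Proof.
apply/eqP; rewrite -subr_eq0; apply/eqP.
transitivity (\sum_X 4 * eps ^+ 3 / #|{: pt m.+1 l}|%:R * (F X * a X - a X ^+ 2)).
  rewrite /Ex /quartic_gap !mulr_suml !mulr_sumr -!(sumrB, big_split) /=.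
  by apply: eq_bigr => X _; ring.
by rewrite -mulr_sumr sumrB parseval subrr mulr0.
Qed.

Lemma Fpart4_gapE :
  Ex (fun X => Fpart F i X ^+ 4)
    - (4 * (eps ^+ 3)%:C * etaF F i - 3 * (eps ^+ 4)%:C * (deltaF F)%:C + Bterm eps F i)
  = (Ex (fun X => quartic_gap (a X) (eps * F X)))%:C.
Proof.
rewrite /etaF /Bterm /deltaF !Ex_Fpart_pow Ex_mul_Fpart -Ex_quartic_gap.
by rewrite !(rmorphB, rmorphD, rmorphM, rmorph_nat).
Qed.

End Gap.

(* The identity behind both claims holds for every [i] and [eps]. *)
Theorem lemmaC13 (R : realType) (n l : nat) (i : nat) (eps : R) :
  (0 < n)%N -> (i <= l)%N -> 0 < eps ->
  (forall F : pt n l -> R,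
     4 * (eps ^+ 3)%:C * etaF F i - 3 * (eps ^+ 4)%:C * (deltaF F)%:C + Bterm eps F i
       <= Ex (fun X => Fpart F i X ^+ 4))
  /\
  (exists qs : seq (rpoly R (pt n l)),
     forall F : pt n l -> R,
       Ex (fun X => Fpart F i X ^+ 4)
         - (4 * (eps ^+ 3)%:C * etaF F i - 3 * (eps ^+ 4)%:C * (deltaF F)%:C + Bterm eps F i)
       = (\sum_(q <- qs) rpoly_eval q F ^+ 2)%:C).
Proof.
case: n => [//|m] _ _ _.
pose ps (X : pt m.+1 l) := quartic_gap_sos (rlin (rprojker R i X)) (rscale eps (rvar R X)).
have [qs qsE] := Ex_sos ps.
have quarticE F :
    Ex (fun X => quartic_gap (rFpart i F X) (eps * F X))
    = \sum_(q <- qs) rpoly_eval q F ^+ 2.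
  rewrite -qsE; apply: eq_Ex => X.
  by rewrite quartic_gap_sosE rlin_eval rscale_eval rvar_eval.
split => [F|]; last by exists qs => F; rewrite Fpart4_gapE quarticE.
by rewrite -subr_ge0 Fpart4_gapE quarticE ler0c sumr_ge0 // => q _; apply: sqr_ge0.
Qed.
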